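(* Let $F$ be an infinite family of index sets linearly ordered by $\subseteq$ such that $I_1\subsetneq I_2$ in $F$ implies $I_2\setminus I_1$ is infinite. If $\langle F;\subseteq\rangle$ is densely ordered, then $|\overline{F}|\ge 2^{\omega}$.
   Context: A predicate symbol $R$ is non-empty for a theory $T$ if $T\vdash\exists\bar x R(\bar x)$, empty otherwise. A complete theory $T$ in a predicate language is language uniform (LU) if for each arity $m$, every permutation of the set of $m$-ary symbols non-empty for $T$ preserves $T$. Let $T_0$ be a complete LU-theory in a relational language $\Sigma_0$, let $n\ge1$, and let $\{R_k\mid k\in I_0\}$, $I_0$ infinite, be the set of $n$-ary symbols of $\Sigma_0$ that are non-empty for $T_0$. An index set is an infinite $I\subseteq I_0$ with $|I|=|I_0|$ and $|I_0\setminus I|$ equal to the number of $n$-ary symbols of $\Sigma_0$ that are empty for $T_0$. For infinite $F'\subseteq F$: $\bigcup F'$ is an (upper) accumulation point of $F'$ if $\bigcup F'\notin F'$, and $\bigcap F'$ is a (lower) accumulation point of $F'$ if $\bigcap F'\notin F'$. The closure $\overline{F}$ is the set consisting of the elements of $F$ together with all accumulation points of infinite subfamilies $F'\subseteq F$, ordered by $\subseteq$. *)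

From HB Require Import structures.
From mathcomp Require Import all_boot.
From mathcomp Require Import boolp classical_sets functions cardinality.
Set Implicit Arguments. Unset Strict Implicit. Unset Printing Implicit Defensive.
Local Open Scope classical_set_scope.
Local Open Scope card_scope.

(* K : type of indices of the n-ary symbols of Sigma_0 non-empty for T_0,
   i.e. I_0 = [set: K]; E : type of the n-ary symbols empty for T_0. *)

Definition index_set (K E : Type) (I : set K) : Prop :=
  infinite_set I /\ I #= [set: K] /\ (~` I) #= [set: E].

Definition subset_chain (K : Type) (F : set (set K)) : Prop :=
  forall A B, F A -> F B -> A `<=` B \/ B `<=` A.

Definition dense_family (K : Type) (F : set (set K)) : Prop :=
  forall A B, F A -> F B -> A `<` B -> exists2 C, F C & A `<` C /\ C `<` B.

Definition accumulation_point (K : Type) (F' : set (set K)) (X : set K) : Prop :=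
  (X = \bigcup_(A in F') A /\ ~ F' X) \/ (X = \bigcap_(A in F') A /\ ~ F' X).

Definition closure_fam (K : Type) (F : set (set K)) : set (set K) :=
  [set X | F X \/ exists F' : set (set K),
     [/\ F' `<=` F, infinite_set F' & accumulation_point F' X]].

From mathcomp Require Import all_boot all_order.
From mathcomp Require Import boolp classical_sets functions cardinality.
Import Order.TTheory.
Local Open Scope classical_set_scope.
Local Open Scope card_scope.

(* Density splits any pair A ⊂ B of members of F into a left pair C ⊂ D and a
   right pair E ⊂ B with A ⊂ C ⊂ D ⊂ E ⊂ B. Iterating this along a branch
   x : nat -> bool yields a strictly increasing sequence of lower ends; its
   union U_x lies in the closure of F, being either a member of F or the upper
   accumulation point of that infinite subfamily. Two branches that first differ
   at step n are separated by D ⊂ E, so x |-> U_x is injective on 2^omega. *)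

Lemma sub_proper_trans {T : Type} {A B C : set T} :
  A `<=` B -> B `<` C -> A `<` C.
Proof. by rewrite -!properEset -subsetEset; apply: le_lt_trans. Qed.

Lemma proper_sub_trans {T : Type} {A B C : set T} :
  A `<` B -> B `<=` C -> A `<` C.
Proof. by rewrite -!properEset -subsetEset; apply: lt_le_trans. Qed.

Lemma card_le_inj {T U : Type} (f : T -> U) (B : set U) :
  injective f -> (forall x, B (f x)) -> [set: T] #<= B.
Proof.
move=> f_inj fB.
have /card_eqPle[_ Tf] := inj_card_eq (A := setT) (in2W f_inj).
by apply: card_le_trans Tf _; apply: subset_card_le => _ [x _ <-].
Qed.

Definition nested_pair {K : Type} (F : set (set K)) (p : set K * set K) :=
  [/\ F p.1, F p.2 & p.1 `<` p.2].

Section BinarySplitting.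
Context {K : Type} {F : set (set K)}.
Context {child : bool -> set K * set K -> set K * set K}.
Hypothesis child_nested : forall b p, nested_pair F p -> nested_pair F (child b p).
Hypothesis child_lower : forall b p, nested_pair F p -> p.1 `<` (child b p).1.
Hypothesis child_upper : forall b p, nested_pair F p -> (child b p).2 `<=` p.2.
Hypothesis child_separated :
  forall p, nested_pair F p -> (child false p).2 `<` (child true p).1.
Context {root : set K * set K}.
Hypothesis root_nested : nested_pair F root.

Fixpoint node (x : nat -> bool) (n : nat) : set K * set K :=
  if n is m.+1 then child (x m) (node x m) else root.

Lemma node_nested x n : nested_pair F (node x n).
Proof. by elim: n => //= n IHn; apply: child_nested. Qed.

Lemma node_lower_homo x :
  {homo (fun n => (node x n).1) : m n / m < n >-> m `<` n}.
Proof.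
apply: homo_ltn => [B A C AB /properW|n]; first exact: proper_sub_trans.
exact: child_lower (node_nested x n).
Qed.

Lemma node_lower_le x :
  {homo (fun n => (node x n).1) : m n / m <= n >-> m `<=` n}.
Proof.
move=> m n; rewrite leq_eqVlt => /orP[/eqP <- //|].
by move/(node_lower_homo x)/properW.
Qed.

Lemma node_upper_homo x :
  {homo (fun n => (node x n).2) : m n / m <= n >-> n `<=` m}.
Proof.
apply: homo_leq => [A|B A C AB BC|n] //; first exact: subset_trans BC AB.
exact: child_upper (node_nested x n).
Qed.

Lemma node_lower_sub_upper x m n : (node x m).1 `<=` (node x n).2.
Proof.
have [_ _ /properW lower_upper] := node_nested x (maxn m n).
by move=> z /(node_lower_le x _ _ (leq_maxl m n))/lower_upper
  /(node_upper_homo x _ _ (leq_maxr m n)).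
Qed.

Lemma node_prefix {x y n} :
  (forall k, k < n -> x k = y k) -> node x n = node y n.
Proof.
elim: n => //= n IHn xy.
by rewrite xy // IHn // => k /ltnW; apply: xy.
Qed.

Definition lower_chain x := range (fun n => (node x n).1).

Definition branch_union x := \bigcup_(A in lower_chain x) A.

Lemma lower_chain_sub x : lower_chain x `<=` F.
Proof. by move=> _ [n _ <-]; case: (node_nested x n). Qed.

Lemma lower_chain_infinite x : infinite_set (lower_chain x).
Proof.
apply/infiniteP; apply: (card_le_inj (fun n => (node x n).1)) => [m n e|n];
  last by exists n.
by case: (ltngtP m n) => // /(node_lower_homo x); rewrite e => /properxx.
Qed.

Lemma node_lower_sub_branch_union x n : (node x n).1 `<=` branch_union x.
Proof. by move=> z zn; exists (node x n).1 => //; exists n. Qed.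

Lemma branch_union_sub_upper x n : branch_union x `<=` (node x n).2.
Proof. by move=> z [_ [m _ <-]]; apply: node_lower_sub_upper. Qed.

Lemma branch_union_proper {x y n} :
  (forall k, k < n -> x k = y k) -> x n = false -> y n = true ->
  branch_union x `<` branch_union y.
Proof.
move=> xy xn yn.
have := child_separated _ (node_nested x n).
rewrite -[in X in _ `<` X]yn [in X in _ `<` X](node_prefix xy) -xn => sep.
apply: (sub_proper_trans (branch_union_sub_upper x n.+1)).
exact: (proper_sub_trans sep (node_lower_sub_branch_union y n.+1)).
Qed.

Lemma branch_union_inj : injective branch_union.
Proof.
move=> x y xy; apply/funext; elim/ltn_ind => n IH.
case xn: (x n); case yn: (y n) => //.
- by have := branch_union_proper (fun k kn => esym (IH k kn)) yn xn;
    rewrite xy => /properxx.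
- by have := branch_union_proper IH xn yn; rewrite xy => /properxx.
Qed.

Lemma branch_union_closure x : closure_fam F (branch_union x).
Proof.
rewrite /closure_fam /=.
have [inF|notinF] := EM (lower_chain x (branch_union x)).
  by left; apply: (lower_chain_sub x).
right; exists (lower_chain x); split; first exact: lower_chain_sub.
  exact: lower_chain_infinite.
by left.
Qed.

Lemma continuum_le_closure_fam : [set: set nat] #<= closure_fam F.
Proof.
apply: (card_le_inj (fun S => branch_union (fun n => `[< S n >]))).
  move=> S T /branch_union_inj ST; apply/funext => n.
  exact: propext (asbool_eq_equiv (congr1 (fun b => b n) ST)).
by move=> S; apply: branch_union_closure.
Qed.

End BinarySplitting.

Lemma dense_family_children {K : Type} {F : set (set K)} :
  dense_family F ->
  exists child : bool -> set K * set K -> set K * set K,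
  [/\ forall b p, nested_pair F p -> nested_pair F (child b p),
      forall b p, nested_pair F p -> p.1 `<` (child b p).1,
      forall b p, nested_pair F p -> (child b p).2 `<=` p.2 &
      forall p, nested_pair F p -> (child false p).2 `<` (child true p).1].
Proof.
move=> F_dense.
have splitting p : exists q : set K * set K * set K, nested_pair F p ->
    [/\ F q.1.1, F q.1.2, F q.2 &
        [/\ p.1 `<` q.1.1, q.1.1 `<` q.1.2, q.1.2 `<` q.2 & q.2 `<` p.2]].
  have [[Fa Fb ab]|] := EM (nested_pair F p); last by exists (set0, set0, set0).
  have [c Fc [ac cb]] := F_dense _ _ Fa Fb ab.
  have [d Fd [cd db]] := F_dense _ _ Fc Fb cb.
  have [e Fe [de eb]] := F_dense _ _ Fd Fb db.
  by exists (c, d, e).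
have [split splitP] := choice splitting.
exists (fun b p => if b then ((split p).2, p.2) else (split p).1).
split.
- by move=> b p /[dup] [[_ Fb _]] /splitP[Fc Fd Fe [_ cd _ eb]]; case: b.
- move=> b p /splitP[_ _ _ [ac cd de _]]; case: b => //=.
  exact: (proper_sub_trans ac (properW (proper_sub_trans cd (properW de)))).
- move=> b p /splitP[_ _ _ [_ _ de eb]]; case: b => //=.
  by move=> z /(properW de) /(properW eb).
- by move=> p /splitP[_ _ _ [_ _ de _]].
Qed.

Lemma infinite_chain_nested_pair {K : Type} {F : set (set K)} :
  infinite_set F -> subset_chain F -> exists p, nested_pair F p.
Proof.
move=> F_inf F_chain; have [A FA] := infinite_setN0 F_inf.
apply: contrapT => no_pair; apply: F_inf.
apply: (sub_finite_set _ (finite_set1 A)) => B FB; apply: contrapT => BnA.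
have proper_of_sub C D : C `<=` D -> C <> D -> C `<` D.
  by move=> CD CnD; rewrite properEneq; split=> //; apply/eqP.
case: (F_chain _ _ FA FB) => [AB|BA].
- by apply: no_pair; exists (A, B); split=> //; apply: proper_of_sub => // /esym.
- by apply: no_pair; exists (B, A); split=> //; apply: proper_of_sub.
Qed.

Theorem proposition4p9 (K E : Type) (F : set (set K)) :
  infinite_set [set: K] ->
  (forall I, F I -> index_set E I) ->
  infinite_set F ->
  subset_chain F ->
  (forall I1 I2, F I1 -> F I2 -> I1 `<` I2 -> infinite_set (I2 `\` I1)) ->
  dense_family F ->
  [set: set nat] #<= closure_fam F.
Proof.
move=> _ _ F_inf F_chain _ F_dense.
have [child [child_nested child_lower child_upper child_separated]] :=
  dense_family_children F_dense.
have [root root_nested] := infinite_chain_nested_pair F_inf F_chain.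
exact: (continuum_le_closure_fam child_nested child_lower child_upper
  child_separated root_nested).
Qed.
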